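(* Let $1\le p,q<\infty$. There is a constant $C(p,q)>0$ depending only on $p,q$ such that for every probability space $(X,\mu)$, every $f\in L_p(X,\mu)$ with $\int f\,d\mu=0$ and every constant $z\in\mathbf{C}$, $$\|M_{p,q}(f)-z\|_{L_q}\ge C(p,q)\,\|f\|_{L_p}^{p/q}.$$
   Context: The Mazur map $M_{p,q}$ sends a measurable $f:X\to\mathbf{C}$ to $M_{p,q}(f)(x)=\mathrm{sign}(f(x))|f(x)|^{p/q}$, where $\mathrm{sign}(z)=z/|z|$ for $z\ne0$ and $\mathrm{sign}(0)=0$. *)

From HB Require Import structures.
From mathcomp Require Import all_boot all_order all_algebra.
From mathcomp Require Import all_classical all_reals all_analysis.
From mathcomp.real_closed Require Import complex.

Set Implicit Arguments.
Unset Strict Implicit.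
Unset Printing Implicit Defensive.

Import Order.TTheory GRing.Theory Num.Theory.
Local Open Scope ring_scope.

Section Mazur.
Context {R : realType} {T : Type}.

Definition cmod (z : R[i]) : R := Normc.normc z.

Definition csign (z : R[i]) : R[i] :=
  if cmod z == 0 then 0 else z / ((cmod z)%:C)%C.

Definition mazur (p q : R) (f : T -> R[i]) : T -> R[i] :=
  fun x => csign (f x) * (((cmod (f x)) `^ (p / q))%:C)%C.
End Mazur.

Definition cmeasurable {d} {T : measurableType d} {R : realType} (f : T -> R[i]) :=
  measurable_fun setT (fun x => @complex.Re R (f x)) /\ measurable_fun setT (fun x => @complex.Im R (f x)).

Definition cLnorm {d} {T : measurableType d} {R : realType}
  (mu : {measure set T -> \bar R}) (p : R) (f : T -> R[i]) : \bar R :=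
  Lnorm mu p%:E (fun x => (cmod (f x))%:E).

From HB Require Import structures.
From mathcomp Require Import all_boot all_order all_algebra.
From mathcomp Require Import all_classical all_reals all_analysis.
From mathcomp.real_closed Require Import complex.
From mathcomp Require Import ring lra measurable_realfun.
Set Implicit Arguments.
Unset Strict Implicit.
Unset Printing Implicit Defensive.
Import Order.TTheory GRing.Theory Num.Theory.
Local Open Scope ring_scope.

(* Write [u = M_{p,q}(w)], so [|u|^q = |w|^p], and let [s = <w, z> / |z|].  Pointwise, either
   [|u| <= 2 |u - z|], giving [|w|^p <= 2^q |u - z|^q], or [u] is close to the line through
   [z]; then [|u| < 2 |z|] and [|w| <= 2 |s|], giving [|w|^p <= 2^(q+1) |z|^(q - q/p) |s|].
   When [s < 0] the angle between [u] and [z] is obtuse, so [|u - z| >= max (|u|, |z|)] and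
   [|z|^(q - q/p) (-s) <= |u - z|^q].  As [f] has mean zero, so has [s(f)], whence
   [E|s(f)| = 2 E[s(f)^-]]; integrating yields [E|f|^p <= (2^q + 2^(q+2)) E|M_{p,q}(f) - z|^q]. *)

Section RealFacts.
Context {R : realType}.

Lemma le_of_sqr_le (x y : R) : 0 <= y -> x ^+ 2 <= y ^+ 2 -> x <= y.
Proof. by move=> y0 h; nra. Qed.

Lemma ler_powR_base (x y r : R) : 0 <= x -> x <= y -> 0 <= r -> x `^ r <= y `^ r.
Proof.
by move=> x0 xy r0; apply: ge0_ler_powR; rewrite ?nnegrE // (le_trans x0).
Qed.

Lemma powR_mulr_le_max (x y e : R) :
  0 <= x -> 0 <= y -> 1 <= e -> x `^ (e - 1) * y <= Num.max (x `^ e) (y `^ e).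
Proof.
move=> x0 y0 e1; have e0 : 0 < e by lra.
have e10 : 0 <= e - 1 by lra.
rewrite le_max; apply/orP; have [xy|yx] := leP x y.
  right; rewrite -(mulr_powRB1 y0 e0) mulrC.
  by apply: ler_wpM2l => //; exact: ler_powR_base.
left; rewrite -(mulr_powRB1 x0 e0) mulrC.
by apply: ler_wpM2r; [exact: powR_ge0 | exact: ltW].
Qed.

Lemma poweR_le_scale (A E : \bar R) (c r : R) :
  0 < c -> 0 <= r -> (0 <= A)%E -> (0 <= E)%E -> (A <= c%:E * E)%E ->
  ((c^-1 `^ r)%:E * A `^ r <= E `^ r)%E.
Proof.
move=> c0 r0 A0 E0 AcE.
have ci0 : (0 <= (c^-1)%:E)%E by rewrite lee_fin invr_ge0 ltW.
rewrite -poweR_EFin -poweRM //.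
apply: (gt0_ler_poweR r0).
- by rewrite in_itv /= leey andbT mule_ge0.
- by rewrite in_itv /= leey andbT.
- by rewrite lee_pdivrMl.
Qed.

End RealFacts.

Section ComplexPlane.
Context {R : realType}.
Implicit Types (u w z : R[i]) (l : R).

Definition dotc u z : R :=
  complex.Re u * complex.Re z + complex.Im u * complex.Im z.

Lemma cmodE u : cmod u = Num.sqrt (complex.Re u ^+ 2 + complex.Im u ^+ 2).
Proof. by case: u. Qed.

Lemma cmod_ge0 u : 0 <= cmod u.
Proof. by rewrite cmodE sqrtr_ge0. Qed.

Lemma sqr_cmod u : cmod u ^+ 2 = complex.Re u ^+ 2 + complex.Im u ^+ 2.
Proof. by rewrite cmodE sqr_sqrtr // addr_ge0 ?sqr_ge0. Qed.

Lemma cmod_eq0 u : (cmod u == 0) = (u == 0).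
Proof.
apply/eqP/eqP => [/Normc.eq0_normc //|->].
by rewrite cmodE /= expr0n addr0 sqrtr0.
Qed.

Lemma normr_Re_le_cmod u : `|complex.Re u| <= cmod u.
Proof.
apply: le_of_sqr_le; first exact: cmod_ge0.
by rewrite real_normK ?num_real // sqr_cmod lerDl sqr_ge0.
Qed.

Lemma normr_Im_le_cmod u : `|complex.Im u| <= cmod u.
Proof.
apply: le_of_sqr_le; first exact: cmod_ge0.
by rewrite real_normK ?num_real // sqr_cmod lerDr sqr_ge0.
Qed.

Lemma ReCM l u : complex.Re (l%:C%C * u) = l * complex.Re u.
Proof. by case: u => a b /=; ring. Qed.

Lemma ImCM l u : complex.Im (l%:C%C * u) = l * complex.Im u.
Proof. by case: u => a b /=; ring. Qed.

Lemma cmodZ l u : 0 <= l -> cmod (l%:C%C * u) = l * cmod u.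
Proof.
move=> l0; rewrite /cmod Normc.normcM; congr (_ * _).
by rewrite /Normc.normc /= expr0n addr0 sqrtr_sqr ger0_norm.
Qed.

Lemma dotcZ l u z : dotc (l%:C%C * u) z = l * dotc u z.
Proof. by rewrite /dotc ReCM ImCM mulrDr !mulrA. Qed.

Lemma sqr_cmodB u z :
  cmod (u - z) ^+ 2 = cmod u ^+ 2 + cmod z ^+ 2 - 2 * dotc u z.
Proof. rewrite !sqr_cmod /dotc !raddfB /=; ring. Qed.

Lemma normr_dotc_le u z : `|dotc u z| <= cmod u * cmod z.
Proof.
apply: le_of_sqr_le; first by rewrite mulr_ge0 ?cmod_ge0.
rewrite real_normK ?num_real // exprMn !sqr_cmod /dotc.
case: u z => a b [c e] /=.
have -> : (a ^+ 2 + b ^+ 2) * (c ^+ 2 + e ^+ 2)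
          = (a * c + b * e) ^+ 2 + (a * e - b * c) ^+ 2 by ring.
by rewrite lerDl sqr_ge0.
Qed.

(* [|u|^2 |z|^2 - (u . z)^2] is the square of the cross product [u x z = (u - z) x z]. *)
Lemma sqr_cross_le u z :
  (cmod u * cmod z) ^+ 2 - dotc u z ^+ 2 <= (cmod (u - z) * cmod z) ^+ 2.
Proof.
rewrite !exprMn !sqr_cmod /dotc !raddfB.
case: u z => a b [c e] /=.
have -> : (a ^+ 2 + b ^+ 2) * (c ^+ 2 + e ^+ 2) - (a * c + b * e) ^+ 2
          = (a * e - b * c) ^+ 2 by ring.
have -> : ((a - c) ^+ 2 + (b - e) ^+ 2) * (c ^+ 2 + e ^+ 2)
          = (a * e - b * c) ^+ 2 + ((a - c) * c + (b - e) * e) ^+ 2 by ring.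
by rewrite lerDl sqr_ge0.
Qed.

Lemma cmodB_ge u z : cmod u - cmod z <= cmod (u - z).
Proof.
apply: le_of_sqr_le; first exact: cmod_ge0.
have := le_trans (ler_norm _) (normr_dotc_le u z).
rewrite sqr_cmodB; lra.
Qed.

Lemma cmodB_ge_max u z :
  dotc u z <= 0 -> Num.max (cmod u) (cmod z) <= cmod (u - z).
Proof.
move=> uz0; rewrite ge_max; apply/andP; split;
  (apply: le_of_sqr_le; first exact: cmod_ge0);
  rewrite sqr_cmodB; have := sqr_ge0 (cmod z); have := sqr_ge0 (cmod u); lra.
Qed.

Lemma cmod_lt_of_cmodB_lt u z : 2 * cmod (u - z) < cmod u -> cmod u < 2 * cmod z.
Proof. by have := cmodB_ge u z; lra. Qed.

(* [|u - z| |z|] bounds the cross product [|u x z| = |u| |z| |sin θ|], so [|u - z| < |u| / 2]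
   forces [|sin θ| < 1/2], hence [|cos θ| >= 1/2]. *)
Lemma sqr_dotc_ge_of_cmodB_lt u z :
  2 * cmod (u - z) < cmod u -> (cmod u * cmod z) ^+ 2 <= 4 * dotc u z ^+ 2.
Proof.
move=> far; rewrite leNgt; apply/negP => wide.
suff : cmod u <= 2 * cmod (u - z) by lra.
have := sqr_cross_le u z; have := cmod_ge0 u; have := cmod_ge0 z.
have := cmod_ge0 (u - z); have := sqr_ge0 (dotc u z).
move: wide; set G := cmod u; set Z := cmod z; set D := cmod (u - z).
move=> wide dot0 D0 Z0 G0 cross.
apply: le_of_sqr_le; first nra.
have Zp : 0 < Z ^+ 2 by nra.
by rewrite -(ler_pM2r Zp); nra.
Qed.

(* [mazur p q id w] is the Mazur map at a single point: [mazur p q f x] is convertible to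
   [mazur p q id (f x)]. *)
Lemma mazurE p q w : mazur p q id w = ((cmod w `^ (p / q - 1))%:C * w)%C.
Proof.
rewrite /mazur /csign /=; have [/eqP|w0] := eqVneq (cmod w) 0.
  by rewrite cmod_eq0 => /eqP ->; rewrite mul0r mulr0.
rewrite powRB ?w0 ?implybT // (powRr1 (cmod_ge0 w)).
by rewrite rmorphM fmorphV /=; ring.
Qed.

Lemma cmod_mazur p q w : cmod (mazur p q id w) = cmod w `^ (p / q - 1) * cmod w.
Proof. by rewrite mazurE cmodZ ?powR_ge0. Qed.

Lemma dotc_mazur p q w z :
  dotc (mazur p q id w) z = cmod w `^ (p / q - 1) * dotc w z.
Proof. by rewrite mazurE dotcZ. Qed.

End ComplexPlane.

Section MazurPointwise.
Variables (R : realType) (p q : R).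
Hypotheses (p1 : 1 <= p) (q1 : 1 <= q).
Implicit Types w z : R[i].

Let p0 : 0 < p. Proof. exact: lt_le_trans ltr01 p1. Qed.
Let q0 : 0 < q. Proof. exact: lt_le_trans ltr01 q1. Qed.

Lemma cmod_mazur_powR w : cmod (mazur p q id w) = cmod w `^ (p / q).
Proof. by rewrite cmod_mazur mulrC mulr_powRB1 ?cmod_ge0 ?divr_gt0. Qed.

Lemma mazur_powR w : cmod (mazur p q id w) `^ q = cmod w `^ p.
Proof.
rewrite cmod_mazur_powR -powRrM; congr (_ `^ _); field.
exact: lt0r_neq0.
Qed.

Lemma cmod_mazur_invE w : cmod w = cmod (mazur p q id w) `^ (q / p).
Proof.
rewrite cmod_mazur_powR -powRrM (_ : p / q * (q / p) = 1) ?powRr1 ?cmod_ge0 //.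
by field; apply/andP; split; exact: lt0r_neq0.
Qed.

Lemma mazur_neg_part_le w z :
  Num.max (- (cmod z `^ (q - q / p) * (dotc w z / cmod z))) 0
  <= cmod (mazur p q id w - z) `^ q.
Proof.
set u := mazur p q id w; set Z := cmod z; set s := dotc w z / Z.
have [s0|sn] := leP 0 s.
  by rewrite max_r ?powR_ge0 // oppr_le0 mulr_ge0 ?powR_ge0.
rewrite max_l; last by rewrite oppr_ge0 mulr_ge0_le0 ?powR_ge0 ?ltW.
have Zp : 0 < Z.
  rewrite lt_def cmod_ge0 andbT; apply: contraTneq sn => Ze.
  by rewrite /s Ze invr0 mulr0 ltxx.
have sw : - s <= cmod w.
  rewrite /s -mulNr ler_pdivrMr //; apply: le_trans (normr_dotc_le w z).
  by rewrite -normrN ler_norm.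
have uz0 : dotc u z <= 0.
  rewrite dotc_mazur mulr_ge0_le0 ?powR_ge0 //.
  by move: sn; rewrite /s pmulr_llt0 ?invr_gt0 // => /ltW.
have W_powR : Z `^ (q - q / p) = (Z `^ (q / p)) `^ (p - 1).
  by rewrite -powRrM; congr (_ `^ _); field; exact: lt0r_neq0.
rewrite -mulrN; apply: le_trans (_ : Z `^ (q - q / p) * cmod w <= _).
  by rewrite ler_wpM2l ?powR_ge0.
rewrite W_powR.
apply: le_trans (powR_mulr_le_max (powR_ge0 Z (q / p)) (cmod_ge0 w) p1) _.
rewrite -powRrM divfK ?lt0r_neq0 // -mazur_powR.
have := cmodB_ge_max uz0; rewrite !ge_max => /andP[Gle Zle].
by apply/andP; split; apply: ler_powR_base (cmod_ge0 _) _ (ltW q0).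
Qed.

Section FarFromZ.
Variables w z : R[i].
Hypothesis far : 2 * cmod (mazur p q id w - z) < cmod (mazur p q id w).

Let Gp : 0 < cmod (mazur p q id w).
Proof. by apply: le_lt_trans far; rewrite mulr_ge0 ?cmod_ge0. Qed.

Let Zp : 0 < cmod z.
Proof. by have := cmod_lt_of_cmodB_lt far; have := Gp; lra. Qed.

Lemma cmod_le_proj_of_far : cmod w <= 2 * `|dotc w z / cmod z|.
Proof.
set a := cmod w; set Z := cmod z; set s := dotc w z / Z.
pose lam := a `^ (p / q - 1).
have Glam : cmod (mazur p q id w) = lam * a := cmod_mazur p q w.
have lZ : 0 < (lam * Z) ^+ 2.
  rewrite exprn_gt0 // mulr_gt0 // lt_def powR_ge0 andbT.
  by apply: contraTneq Gp => l0; rewrite Glam l0 mul0r ltxx.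
have := sqr_dotc_ge_of_cmodB_lt far.
rewrite dotc_mazur Glam -/lam (_ : dotc w z = Z * s); last first.
  by rewrite /s mulrCA divff ?mulr1 // lt0r_neq0.
move=> h; apply: le_of_sqr_le; first by rewrite mulr_ge0.
have -> : (2 * `|s|) ^+ 2 = 4 * s ^+ 2.
  by rewrite exprMn real_normK ?num_real //; ring.
rewrite -(ler_pM2l lZ).
by move: h; rewrite -/Z; congr (_ <= _); ring.
Qed.

Lemma powR_pred_le_of_far : cmod w `^ (p - 1) <= 2 `^ q * cmod z `^ (q - q / p).
Proof.
have aZ : cmod w <= (2 * cmod z) `^ (q / p).
  rewrite cmod_mazur_invE; apply: ler_powR_base (cmod_ge0 _) _ (ltW (divr_gt0 q0 p0)).
  exact: ltW (cmod_lt_of_cmodB_lt far).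
have p10 : 0 <= p - 1 by rewrite subr_ge0.
apply: le_trans (ler_powR_base (cmod_ge0 w) aZ p10) _.
rewrite -powRrM (_ : q / p * (p - 1) = q - q / p); last by field; exact: lt0r_neq0.
rewrite powRM ?ler0n ?(ltW Zp) // ler_wpM2r ?powR_ge0 // ler_powR ?ler1n //.
by rewrite gerBl divr_ge0 // ltW.
Qed.

End FarFromZ.

Lemma mazur_powR_le w z :
  cmod w `^ p <= 2 `^ q * cmod (mazur p q id w - z) `^ q
                 + 2 `^ (q + 1) * `|cmod z `^ (q - q / p) * (dotc w z / cmod z)|.
Proof.
set u := mazur p q id w; set W := cmod z `^ (q - q / p); set s := dotc w z / cmod z.
have [near|far] := leP (cmod u) (2 * cmod (u - z)).
  apply: le_trans (_ : 2 `^ q * cmod (u - z) `^ q <= _); last first.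
    by rewrite lerDl mulr_ge0 ?powR_ge0.
  rewrite -mazur_powR -powRM ?ler0n ?cmod_ge0 //.
  exact: ler_powR_base (cmod_ge0 _) near (ltW q0).
apply: le_trans (_ : 2 `^ (q + 1) * `|W * s| <= _); last first.
  by rewrite lerDr mulr_ge0 ?powR_ge0.
have two_pow : 2 `^ (q + 1) = 2 `^ q * 2 :> R.
  by rewrite powRD ?pnatr_eq0 ?implybT // powRr1 ?ler0n.
rewrite -(mulr_powRB1 (cmod_ge0 w) p0) normrM (ger0_norm (powR_ge0 _ _)) two_pow.
rewrite (_ : _ * (W * _) = 2 * `|s| * (2 `^ q * W)); last by ring.
apply: ler_pM (cmod_ge0 w) (powR_ge0 _ _) _ _.
- exact: cmod_le_proj_of_far.
- exact: powR_pred_le_of_far.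
Qed.

End MazurPointwise.

Section MeanZeroIntegral.
Context d (X : measurableType d) (R : realType).
Variable mu : {measure set X -> \bar R}.
Local Open Scope ereal_scope.

Lemma integral_abs_mean0 (g : X -> R) :
  mu.-integrable setT (EFin \o g) -> \int[mu]_x (g x)%:E = 0 ->
  \int[mu]_x `|g x|%:E = 2%:E * \int[mu]_x (Num.max (- g x) 0)%:E.
Proof.
move=> ig g0; set G := EFin \o g.
have mG : measurable_fun setT G := measurable_int mu ig.
have negE : G^\- = fun x => (Num.max (- g x) 0)%:E.
  by apply/funext => x; rewrite funenegE EFin_max.
have pos_neg : \int[mu]_x G^\+ x = \int[mu]_x G^\- x.
  move: g0; rewrite integralE.
  have := integral_funepos_lt_pinfty measurableT ig.
  have := integral_funeneg_lt_pinfty measurableT ig.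
  have := integral_ge0 mu (fun x _ => funepos_ge0 G x).
  have := integral_ge0 mu (fun x _ => funeneg_ge0 G x).
  case: (\int[mu]_x G^\- x) => // n; case: (\int[mu]_x G^\+ x) => // m.
  by move=> _ _ _ _ /eqP; rewrite -EFinB eqe subr_eq0 => /eqP ->.
rewrite (eq_integral (fun x => G^\+ x + G^\- x)); last first.
  by move=> x _; rewrite -[LHS]/((abse \o G) x) fune_abse.
rewrite ge0_integralD //; last 2 first.
- exact: measurable_funepos.
- exact: measurable_funeneg.
rewrite pos_neg -negE (_ : 2%:E = 1 + 1); last by rewrite -EFinD.
by rewrite ge0_muleDl ?mul1e // integral_ge0 // => x _; exact: funeneg_ge0.
Qed.

Lemma ge0_integral_lincomb (F1 F2 : X -> R) (c1 c2 : R) :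
  (0 <= c1)%R -> (0 <= c2)%R -> (forall x, 0 <= F1 x)%R -> (forall x, 0 <= F2 x)%R ->
  measurable_fun setT F1 -> measurable_fun setT F2 ->
  \int[mu]_x (c1 * F1 x + c2 * F2 x)%:E
  = c1%:E * \int[mu]_x (F1 x)%:E + c2%:E * \int[mu]_x (F2 x)%:E.
Proof.
move=> c10 c20 F10 F20 /measurable_EFinP mF1 /measurable_EFinP mF2.
have F1E0 : forall x, setT x -> 0 <= (F1 x)%:E by move=> x _; rewrite lee_fin.
have F2E0 : forall x, setT x -> 0 <= (F2 x)%:E by move=> x _; rewrite lee_fin.
under eq_integral => x _ do rewrite EFinD !EFinM.
rewrite ge0_integralD ?ge0_integralZl_EFin //.
- by move=> x _; rewrite mule_ge0 ?lee_fin.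
- exact: emeasurable_funM.
- by move=> x _; rewrite mule_ge0 ?lee_fin.
- exact: emeasurable_funM.
Qed.

Lemma mean0_integral_le (F G g : X -> R) (c1 c2 : R) :
  (0 <= c1)%R -> (0 <= c2)%R ->
  measurable_fun setT F -> measurable_fun setT G ->
  mu.-integrable setT (EFin \o g) -> \int[mu]_x (g x)%:E = 0 ->
  (forall x, 0 <= F x)%R ->
  (forall x, F x <= c1 * G x + c2 * `|g x|)%R ->
  (forall x, Num.max (- g x) 0 <= G x)%R ->
  \int[mu]_x (F x)%:E <= (c1 + 2 * c2)%:E * \int[mu]_x (G x)%:E.
Proof.
move=> c10 c20 mF mG ig g0 F0 Fle Gge.
have G0 x : (0 <= G x)%R by apply: le_trans (Gge x); rewrite le_max lexx orbT.
have mg : measurable_fun setT g by apply/measurable_EFinP; exact: measurable_int ig.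
have mabs : measurable_fun setT (fun x => `|g x|)%R by exact: measurableT_comp.
apply: (@le_trans _ _ (\int[mu]_x (c1 * G x + c2 * `|g x|)%:E)).
  apply: ge0_le_integral => //.
  - by move=> x _; rewrite lee_fin.
  - exact/measurable_EFinP.
  - by apply/measurable_EFinP; apply: measurable_funD; apply: measurable_funM.
  - by move=> x _; rewrite lee_fin.
rewrite ge0_integral_lincomb // integral_abs_mean0 // muleA -EFinM.
rewrite [(c1 + _)%:E]EFinD ge0_muleDl ?lee_fin ?mulr_ge0 ?integral_ge0 //.
rewrite leeD2l // mulrC lee_wpmul2l ?lee_fin ?mulr_ge0 //.
apply: ge0_le_integral => //.
- by move=> x _; rewrite lee_fin le_max lexx orbT.
- by apply/measurable_EFinP; apply: measurable_maxr => //; exact: measurableT_comp.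
- exact/measurable_EFinP.
- by move=> x _; rewrite lee_fin.
Qed.

End MeanZeroIntegral.

Section FiniteMeasure.
Context d (X : measurableType d) (R : realType).
Variable mu : {finite_measure set X -> \bar R}.
Local Open Scope ereal_scope.

Lemma integrable_of_powR_finite (g h : X -> R) (p : R) : (1 <= p)%R ->
  measurable_fun setT g -> measurable_fun setT h -> (forall x, `|g x| <= h x)%R ->
  \int[mu]_x (h x `^ p)%:E < +oo -> mu.-integrable setT (EFin \o g).
Proof.
move=> p1 mg mh gh hp.
have h0 x : (0 <= h x)%R := le_trans (normr_ge0 _) (gh x).
have le_dom x : (h x <= 1 + h x `^ p)%R.
  have [h1|h1] := leP (h x) 1%R; first by rewrite ler_wpDr ?powR_ge0.
  apply: le_trans (_ : h x `^ p <= _)%R; last by rewrite lerDr.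
  by rewrite -[leLHS](powRr1 (h0 x)) ler_powR // ltW.
have ihp : mu.-integrable setT (fun x => (h x `^ p)%:E).
  apply/integrableP; split.
    by apply/measurable_EFinP; exact: measurableT_comp (measurable_powR _) mh.
  by under eq_integral => x _ do rewrite gee0_abs ?lee_fin ?powR_ge0 //.
have idom : mu.-integrable setT (fun x => (1 + h x `^ p)%:E).
  under eq_fun => x do rewrite EFinD.
  exact: integrableD (finite_measure_integrable_cst mu 1%R measurableT) ihp.
apply: le_integrable idom => //; first exact/measurable_EFinP.
move=> x _; rewrite lee_fin (ger0_norm (le_trans (h0 x) (le_dom x))).
exact: le_trans (gh x) (le_dom x).
Qed.

End FiniteMeasure.

Section ComplexLnorm.
Context d (X : measurableType d) (R : realType).
Implicit Types (f : X -> R[i]) (p : R).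

Lemma cLnormE (mu : {measure set X -> \bar R}) p f :
  cLnorm mu p f = ((\int[mu]_x (cmod (f x) `^ p)%:E) `^ p^-1)%E.
Proof.
rewrite /cLnorm unlock /Lnorm; congr (_ `^ _)%E; apply: eq_integral => x _.
by rewrite /= ger0_norm ?cmod_ge0.
Qed.

Lemma measurable_cmod f : cmeasurable f -> measurable_fun setT (fun x => cmod (f x)).
Proof.
case=> mRe mIm; rewrite (_ : (fun x => _) = fun x =>
  Num.sqrt (complex.Re (f x) ^+ 2 + complex.Im (f x) ^+ 2)); last first.
  by apply/funext => x; rewrite cmodE.
apply: measurableT_comp (continuous_measurable_fun (@sqrt_continuous R)) _.
by apply: measurable_funD; exact: measurable_funX.
Qed.

Lemma cmeasurable_mazurB p q f z :
  cmeasurable f -> cmeasurable (fun x => mazur p q f x - z).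
Proof.
move=> mf; have [mRe mIm] := mf.
have mlam : measurable_fun setT (fun x => cmod (f x) `^ (p / q - 1)).
  exact: measurableT_comp (measurable_powR _) (measurable_cmod mf).
split; under eq_fun => x do rewrite raddfB [mazur _ _ _ _]mazurE /= ?ReCM ?ImCM.
- by apply: measurable_funB => //; exact: measurable_funM.
- by apply: measurable_funB => //; exact: measurable_funM.
Qed.

Lemma cLnorm_integrable_ReIm (mu : {finite_measure set X -> \bar R}) p f :
  1 <= p -> cmeasurable f -> (cLnorm mu p f < +oo)%E ->
  mu.-integrable setT (EFin \o (fun x => complex.Re (f x))) /\
  mu.-integrable setT (EFin \o (fun x => complex.Im (f x))).
Proof.
move=> p1 mf fp; have [mRe mIm] := mf; have mcf := measurable_cmod mf.
have fin : (\int[mu]_x (cmod (f x) `^ p)%:E < +oo)%E.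
  move: fp; rewrite cLnormE; apply: lty_poweRy.
  by rewrite invr_neq0 // gt_eqF // (lt_le_trans ltr01 p1).
split; apply: integrable_of_powR_finite p1 _ mcf _ fin => // x.
- exact: normr_Re_le_cmod.
- exact: normr_Im_le_cmod.
Qed.

Lemma dotc_integral_mean0 (mu : {measure set X -> \bar R}) f z (k : R) :
  mu.-integrable setT (EFin \o (fun x => complex.Re (f x))) ->
  mu.-integrable setT (EFin \o (fun x => complex.Im (f x))) ->
  (\int[mu]_x (complex.Re (f x))%:E = 0)%E ->
  (\int[mu]_x (complex.Im (f x))%:E = 0)%E ->
  mu.-integrable setT (EFin \o (fun x => k * dotc (f x) z)) /\
  (\int[mu]_x (k * dotc (f x) z)%:E = 0)%E.
Proof.
move=> iRe iIm Re0 Im0; rewrite [EFin \o _]/comp.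
have -> : (fun x => (k * dotc (f x) z)%:E) = fun x =>
    ((k * complex.Re z)%:E * (complex.Re (f x))%:E
     + (k * complex.Im z)%:E * (complex.Im (f x))%:E)%E.
  by apply/funext => x; rewrite -!EFinM -EFinD /dotc; congr (_%:E); ring.
split; first by apply: integrableD => //; exact: integrableZl.
rewrite integralD //; try exact: integrableZl.
by rewrite !integralZl // Re0 Im0 !mule0 adde0.
Qed.

End ComplexLnorm.

Theorem lemma5p1 (R : realType) (p q : R) (hp : 1 <= p) (hq : 1 <= q) :
  exists C : R, 0 < C /\
  forall (d : measure_display) (X : measurableType d)
         (mu : probability X R) (f : X -> R[i]),
    cmeasurable f ->
    (cLnorm mu p f < +oo)%E ->
    (\int[mu]_x (@complex.Re R (f x))%:E = 0)%E ->
    (\int[mu]_x (@complex.Im R (f x))%:E = 0)%E ->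
    forall z : R[i],
      (cLnorm mu q (fun x => (mazur p q f x - z)%R)
         >= C%:E * (cLnorm mu p f) `^ (p / q)%R)%E.
Proof.
have p0 : 0 < p := lt_le_trans ltr01 hp.
have q0 : 0 < q := lt_le_trans ltr01 hq.
pose K := 2 `^ q + 2 * 2 `^ (q + 1).
have K0 : 0 < K by rewrite addr_gt0 ?mulr_gt0 ?powR_gt0.
exists (K^-1 `^ q^-1); split; first by rewrite powR_gt0 // invr_gt0.
move=> d X mu f mf fp Re0 Im0 z.
have [iRe iIm] := cLnorm_integrable_ReIm hp mf fp.
pose g x := cmod z `^ (q - q / p) * (dotc (f x) z / cmod z).
have [ig g0] : mu.-integrable setT (EFin \o g) /\ (\int[mu]_x (g x)%:E = 0)%E.
  have -> : g = fun x => cmod z `^ (q - q / p) / cmod z * dotc (f x) z.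
    by apply/funext => x; rewrite /g /= mulrA mulrAC.
  exact: (dotc_integral_mean0 _ _ iRe iIm Re0 Im0).
have mB := measurable_cmod (cmeasurable_mazurB p q z mf).
rewrite !cLnormE -poweRrM (_ : p^-1 * (p / q) = q^-1); last first.
  by field; apply/andP; split; exact: lt0r_neq0.
apply: poweR_le_scale => //.
- by rewrite invr_ge0 ltW.
- by apply: integral_ge0 => x _; rewrite lee_fin powR_ge0.
- by apply: integral_ge0 => x _; rewrite lee_fin powR_ge0.
apply: (mean0_integral_le _ _ _ _ ig g0) => //.
- exact: measurableT_comp (measurable_powR _) (measurable_cmod mf).
- exact: measurableT_comp (measurable_powR _) mB.
- by move=> x; rewrite powR_ge0.
- move=> x; exact: mazur_powR_le.
- move=> x; exact: mazur_neg_part_le.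
Qed.
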